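(* There is an absolute constant $C>0$ such that for all positive integers $n,d$ and every nonempty family $E$ of subsets of $[n]$, each of size at most $d$, there exists a three-stage group testing algorithm that finds the defective hyperedge in $E$ and uses at most $C\left(\sqrt d\,\log|E|+d\right)$ tests.
   Context: Group testing on a hypergraph: items are $[n]=\{1,\dots,n\}$, $E$ is a family of subsets of $[n]$ (hyperedges), exactly one $e^*\in E$ is defective (unknown); a test on a pool $T\subseteq[n]$ is positive iff $T\cap e^*\neq\emptyset$. A three-stage algorithm consists of three stages, each a non-adaptive set of tests performed in parallel: the stage-1 pools are fixed in advance, the stage-2 pools are determined by the stage-1 responses, and the stage-3 pools by the stage-1 and stage-2 responses. It finds the defective hyperedge iff for any two distinct $e^*,f\in E$ the sequences of all responses obtained when $e^*$ is defective and when $f$ is defective differ. The number of tests is the maximum over $e^*\in E$ of the total number of pools tested. Logarithms to a fixed base. *)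

From mathcomp Require Import all_boot.
From Stdlib Require Import Reals.

Set Implicit Arguments.
Unset Strict Implicit.
Unset Printing Implicit Defensive.

Definition test_resp (n : nat) (e : {set 'I_n}) (T : {set 'I_n}) : bool :=
  T :&: e != set0.

(* A three-stage algorithm: stage-1 pools fixed; stage-2 pools are a function
   of the stage-1 responses; stage-3 pools are a function of the stage-1 and
   stage-2 responses. *)
Record three_stage (n : nat) := ThreeStage {
  stage1 : seq {set 'I_n};
  stage2 : seq bool -> seq {set 'I_n};
  stage3 : seq bool -> seq bool -> seq {set 'I_n}
}.

Definition resp1 n (A : three_stage n) (e : {set 'I_n}) : seq bool :=
  map (test_resp e) (stage1 A).
Definition resp2 n (A : three_stage n) (e : {set 'I_n}) : seq bool :=
  map (test_resp e) (stage2 A (resp1 A e)).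
Definition resp3 n (A : three_stage n) (e : {set 'I_n}) : seq bool :=
  map (test_resp e) (stage3 A (resp1 A e) (resp2 A e)).

Definition responses n (A : three_stage n) (e : {set 'I_n})
  : seq bool * seq bool * seq bool :=
  (resp1 A e, resp2 A e, resp3 A e).

Definition finds n (A : three_stage n) (E : {set {set 'I_n}}) : Prop :=
  forall e f, e \in E -> f \in E -> e <> f -> responses A e <> responses A f.

Definition ntests_for n (A : three_stage n) (e : {set 'I_n}) : nat :=
  size (stage1 A) + size (stage2 A (resp1 A e))
  + size (stage3 A (resp1 A e) (resp2 A e)).

Definition ntests n (A : three_stage n) (E : {set {set 'I_n}}) : nat :=
  \max_(e in E) ntests_for A e.

(* Let t = floor(sqrt d).  A random pool containing each item independently with
   probability 1/(4d+1) separates two hyperedges e, f with |e \ f| >= t with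
   probability at least 1/(40t); since there are fewer than 2^(2 log|E| + 1) pairs, a
   greedy (derandomised) choice of O(t log|E|) such pools separates all of them:
   this is stage 1.  The hyperedges consistent with the stage-1 responses then
   pairwise differ in fewer than t items.  Stage 2 tests one by one the at most d
   items of one of them, the pivot; the survivors agree on the pivot, and their
   residues outside it have fewer than t items.  Stage 3 separates these residues
   by O(t log|E|) random pools of inclusion probability 1/(4t+1), with the pivot
   removed from every pool. *)

From mathcomp Require Import all_boot.
From Stdlib Require Import Reals Lra.
From mathcomp Require Import ssrnat zify.

Set Implicit Arguments.
Unset Strict Implicit.
Unset Printing Implicit Defensive.

Lemma leq_expn2r m n e : m <= n -> m ^ e <= n ^ e.
Proof. by case: e => // e; rewrite leq_exp2r. Qed.

Lemma succ_expn_sub_le k m : k.+1 ^ m * k.+1 <= k ^ m * k.+1 + m * k.+1 ^ m.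
Proof.
elim: m => [|m IHm]; first by rewrite !expn0 mul1n leq_addr.
have le_pow := leq_expn2r m (leqnSn k).
rewrite !expnS; nia.
Qed.

Lemma succ_expn_le_double k m : 2 * m <= k.+1 -> k.+1 ^ m <= 2 * k ^ m.
Proof.
move=> le_2m; have := succ_expn_sub_le k m.
rewrite -(leq_pmul2r (ltn0Sn k)); nia.
Qed.

Lemma bernoulli_expn x m : x ^ m * (x + m) <= x.+1 ^ m * x.
Proof.
elim: m => [|m IHm]; first by rewrite !expn0 addn0.
have le_pow := leq_expn2r m (leqnSn x).
rewrite !expnS; nia.
Qed.

Lemma double_pred_expn_le a : 0 < a -> 2 * a.-1 ^ a <= a ^ a.
Proof.
case: a => [|[|a]] // _; have := bernoulli_expn a.+1 a.+2.
rewrite -(leq_pmul2r (ltn0Sn a)) /=.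
move: (a.+1 ^ a.+2) (a.+2 ^ a.+2) => X Y; nia.
Qed.

Lemma double_count (A B : finType) (r : A -> B -> bool) :
  \sum_a #|[set b | r a b]| = \sum_b #|[set a | r a b]|.
Proof.
have card_sum (T : finType) (P : pred T) : #|[set x | P x]| = \sum_x P x.
  by rewrite -sum1dep_card big_mkcond; apply: eq_bigr => x _; case: (P x).
under eq_bigr do rewrite card_sum.
by rewrite exchange_big; under [RHS]eq_bigr do rewrite card_sum.
Qed.

Lemma exists_hit_many (Om X : finType) (hit : Om -> X -> bool) (R : {set X}) a :
  0 < #|Om| -> (forall p, p \in R -> #|Om| <= a * #|[set w | hit w p]|) ->
  exists w, #|R| <= a * #|[set p in R | hit w p]|.
Proof.
move=> Om_gt0 hitR; pose c w := #|[set p in R | hit w p]|.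
have [w max_w] := eq_bigmax c Om_gt0.
exists w; rewrite -/(c w) -max_w -(leq_pmul2l Om_gt0).
have sum_le_max : \sum_w c w <= #|Om| * \max_w c w.
  by rewrite -sum_nat_const; apply: leq_sum => w' _; apply: leq_bigmax.
rewrite mulnCA; apply: leq_trans (leq_mul (leqnn a) sum_le_max).
have -> : \sum_w c w = \sum_(p in R) #|[set w | hit w p]|.
  rewrite (double_count (fun w p => (p \in R) && hit w p)) [RHS]big_mkcond.
  apply: eq_bigr => p _; case: (p \in R) => //.
  by apply: eq_card0 => w'; rewrite inE.
rewrite mulnC -sum_nat_const big_distrr; exact: leq_sum.
Qed.

Section GreedyCover.

Variables (Om X : finType) (hit : Om -> X -> bool) (P : {set X}) (a : nat).
Hypotheses (Om_gt0 : 0 < #|Om|) (a_gt0 : 0 < a).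
Hypothesis hitP : forall p, p \in P -> #|Om| <= a * #|[set w | hit w p]|.

(* Each round covers a 1/a fraction of the uncovered pairs (by averaging), and
   (1 - 1/a)^a <= 1/2, so a * b rounds leave at most #|P| / 2^b of them. *)
Definition uncovered (ws : seq Om) := [set p in P | ~~ has (hit^~ p) ws].

Lemma uncovered_decay m :
  exists ws, size ws <= m /\ #|uncovered ws| * a ^ m <= #|P| * a.-1 ^ m.
Proof.
elim: m => [|m [ws [size_ws decay]]].
  exists [::]; split=> //; rewrite !expn0 !muln1.
  by apply/subset_leq_card/subsetP => p; rewrite inE => /andP[].
set R := uncovered ws.
have [w hit_many] : exists w, #|R| <= a * #|[set p in R | hit w p]|.
  by apply: exists_hit_many => // p; rewrite inE => /andP[/hitP].
exists (w :: ws); split; first exact: size_ws.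
have -> : uncovered (w :: ws) = R :\: [set p in R | hit w p].
  by apply/setP => p; rewrite /R !inE /=; case: (hit w p); case: (p \in P); case: has.
rewrite cardsDS; last by apply/subsetP => p; rewrite inE => /andP[].
have hits_le : #|[set p in R | hit w p]| <= #|R|.
  by apply/subset_leq_card/subsetP => p; rewrite inE => /andP[].
have step : (#|R| - #|[set p in R | hit w p]|) * a <= #|R| * a.-1.
  by case: a a_gt0 hit_many => // a'; nia.
rewrite !expnS mulnA; apply: leq_trans (leq_mul step (leqnn _)) _.
by rewrite -mulnA mulnCA [leqRHS]mulnCA leq_mul2l decay orbT.
Qed.

Lemma greedy_cover b : #|P| < 2 ^ b ->
  exists ws, size ws <= a * b /\ {in P, forall p, has (hit^~ p) ws}.
Proof.
move=> card_P; have [ws [size_ws decay]] := uncovered_decay (a * b).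
exists ws; split=> // p pP; apply/negPn/negP => not_hit.
have unc_gt0 : 0 < #|uncovered ws| by apply/card_gt0P; exists p; rewrite inE pP.
have pow_gt0 : 0 < a ^ (a * b) by rewrite expn_gt0 a_gt0.
have pow_le := leq_trans (leq_pmull _ unc_gt0) decay.
have half_le : 2 ^ b * a.-1 ^ (a * b) <= a ^ (a * b).
  by rewrite !expnM -expnMn; apply/leq_expn2r/double_pred_expn_le.
have := leq_mul card_P (leqnn (a.-1 ^ (a * b))).
move: pow_gt0 pow_le half_le; move: (2 ^ b) (a ^ (a * b)) (a.-1 ^ (a * b)) => B Am Bm; nia.
Qed.

End GreedyCover.

Definition separates n (T e f : {set 'I_n}) := test_resp e T != test_resp f T.

Section RandomPool.

Variables n k : nat.

(* For uniform [w], each item lies in [pool w] independently with probability 1/(k+1). *)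
Definition pool (w : {ffun 'I_n -> 'I_k.+1}) : {set 'I_n} := [set x | w x == ord0].

Definition isolating (U : {set 'I_n}) x :=
  [set w : {ffun 'I_n -> 'I_k.+1} | [forall y in U, (w y == ord0) == (y == x)]].

Lemma isolating_inj (U : {set 'I_n}) x x' w : x \in U -> x' \in U ->
  w \in isolating U x -> w \in isolating U x' -> x = x'.
Proof.
move=> xU x'U /[!inE] /forall_inP iso_x /forall_inP iso_x'.
by apply/eqP; rewrite -(eqP (iso_x' x xU)) (eqP (iso_x x xU)).
Qed.

Lemma separates_isolating (e f : {set 'I_n}) x w :
  x \in e :\: f -> w \in isolating (e :|: f) x -> separates (pool w) e f.
Proof.
rewrite !inE => /andP[xNf xe] /forall_inP iso_x.
rewrite /separates; have -> : test_resp e (pool w).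
  by apply/set0Pn; exists x; have := iso_x x; rewrite !inE xe eqxx andbT => /(_ isT) /eqP ->.
suff -> : test_resp f (pool w) = false by [].
apply/negbTE; rewrite negbK; apply/eqP/setP => y; rewrite !inE; apply/negbTE/andP => -[yw yf].
have /eqP yx : y == x by have := iso_x y; rewrite !inE yf orbT yw => /(_ isT) /eqP <-.
by rewrite -yx yf in xNf.
Qed.

Lemma card_isolating (U : {set 'I_n}) x : x \in U ->
  #|isolating U x| = k ^ #|U|.-1 * k.+1 ^ (n - #|U|).
Proof.
move=> xU; pose F y := [pred c : 'I_k.+1 | (y \in U) ==> ((c == ord0) == (y == x))].
have -> : #|isolating U x| = #|(finfun.family F : simpl_pred {ffun 'I_n -> 'I_k.+1})|.
  apply: eq_card => w; rewrite inE.
  by apply/forall_inP/familyP => iso_w y; [apply/implyP/iso_w | apply/implyP/iso_w].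
rewrite card_family foldrE big_map big_enum /=.
have card_F y : #|F y| = if y \in U then (if y == x then 1 else k) else k.+1.
  rewrite /F; case: (y \in U) => /=; last by rewrite -[RHS](card_ord k.+1); apply: eq_card.
  case: (y == x).
    by rewrite -(card1 (ord0 : 'I_k.+1)); apply: eq_card => c; rewrite !inE eqb_id.
  transitivity #|predC1 (ord0 : 'I_k.+1)|; last by rewrite cardC1 card_ord.
  by apply: eq_card => c; rewrite !inE eqbF_neg.
under eq_bigr do rewrite card_F.
rewrite (bigID (mem U)) (bigD1 x xU) /= eqxx xU mul1n.
rewrite (eq_bigl (fun y => y \in U :\ x)) => [|y]; last by rewrite !inE andbC.
rewrite [X in _ * X](eq_bigl (fun y => y \in ~: U)) => [|y]; last by rewrite !inE.
rewrite (eq_bigr (fun=> k)) => [|y]; last by rewrite !inE => /andP[/negbTE-> ->].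
rewrite [X in _ * X](eq_bigr (fun=> k.+1)) => [|y]; last by rewrite !inE => /negbTE->.
rewrite !prod_nat_const; congr (k ^ _ * k.+1 ^ _).
  by rewrite (cardsD1 x U) xU.
by rewrite cardsCs setCK card_ord.
Qed.

(* The events [w \in isolating (e :|: f) x] for x in [e :\: f] are disjoint, each
   forces [pool w] to separate e and f, and each has probability
   (1/(k+1)) (k/(k+1))^(#|e :|: f| - 1) >= 1/(2(k+1)). *)
Lemma card_separating_pools a (e f : {set 'I_n}) :
  2 * #|e :|: f| <= k.+1 -> 2 * k.+1 <= a * #|e :\: f| ->
  #|{ffun 'I_n -> 'I_k.+1}| <= a * #|[set w | separates (pool w) e f]|.
Proof.
move=> small_U large_S.
set U := e :|: f in small_U *; set S := e :\: f in large_S *.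
have SU : S \subset U by apply/subsetP => y; rewrite !inE => /andP[_ ->].
have S_gt0 : 0 < #|S| by move: large_S; case: #|S| => //; rewrite muln0.
have U_gt0 : 0 < #|U| := leq_trans S_gt0 (subset_leq_card SU).
have U_le_n : #|U| <= n by rewrite -[n in _ <= n]card_ord max_card.
have sep_ge : #|S| * (k ^ #|U|.-1 * k.+1 ^ (n - #|U|))
              <= #|[set w | separates (pool w) e f]|.
  have -> : #|S| * (k ^ #|U|.-1 * k.+1 ^ (n - #|U|))
            = \sum_y #|[set w | (y \in S) && (w \in isolating U y)]|.
    rewrite -sum_nat_const big_mkcond /=; apply: eq_bigr => y _.
    case: ifP => yS; last by apply/esym/eq_card0 => w; rewrite inE.
    by rewrite -(card_isolating (subsetP SU y yS)); apply: eq_card => w; rewrite inE.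
  rewrite double_count -sum1dep_card [leqRHS]big_mkcond; apply: leq_sum => w _.
  case: (set_0Vmem [set y | (y \in S) && (w \in isolating U y)]) => [-> | [y]].
    by rewrite cards0.
  rewrite inE => /andP[yS iso_y]; rewrite (separates_isolating yS iso_y).
  apply/card_le1_eqP => y1 y2; rewrite [y1 \in _]in_set [y2 \in _]in_set.
  move=> /andP[y1S iso1] /andP[y2S iso2].
  exact: isolating_inj (subsetP SU _ y2S) (subsetP SU _ y1S) iso2 iso1.
have pow_le : k.+1 ^ #|U|.-1 <= 2 * k ^ #|U|.-1 by apply: succ_expn_le_double; lia.
have -> : #|{ffun 'I_n -> 'I_k.+1}| = k.+1 * k.+1 ^ #|U|.-1 * k.+1 ^ (n - #|U|).
  by rewrite card_ffun !card_ord -expnS -expnD; congr (_ ^ _); lia.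
apply: leq_trans (leq_mul (leqnn a) sep_ge).
rewrite !mulnA leq_mul2r; apply/orP; right.
apply: leq_trans (leq_mul (leqnn _) pow_le) _.
by rewrite mulnCA mulnA leq_mul2r large_S orbT.
Qed.

End RandomPool.

Definition outcome n (Ts : seq {set 'I_n}) (e : {set 'I_n}) := map (test_resp e) Ts.

Definition separating n s (Ts : seq {set 'I_n}) (G : {set {set 'I_n}}) :=
  [forall g in G, forall h in G, (s <= #|g :\: h|) ==> (outcome Ts g != outcome Ts h)].

Lemma separates_outcome_neq n (Ts : seq {set 'I_n}) g h :
  has (fun T => separates T g h) Ts -> outcome Ts g != outcome Ts h.
Proof. by case/hasP => T T_Ts sepT; apply: contra sepT => /eqP/eq_in_map/(_ T T_Ts)->. Qed.

Lemma card_pairs_lt (T : finType) (G : {set T}) (P : {set T * T}) L :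
  #|G| <= 2 ^ L -> P \subset setX G G -> #|P| < 2 ^ (2 * L + 1).
Proof.
move=> card_G /subset_leq_card; rewrite cardsX => card_P.
have := leq_trans card_P (leq_mul card_G card_G).
rewrite -expnD addnn -mul2n addn1 expnS; have := expn_gt0 2 (2 * L); lia.
Qed.

Lemma separating_pools n (G : {set {set 'I_n}}) D s a L :
  #|G| <= 2 ^ L -> (forall g, g \in G -> #|g| <= D) -> 2 * (4 * D).+1 <= a * s ->
  exists Ts, (size Ts <= a * (2 * L + 1)) && separating s Ts G.
Proof.
move=> card_G small_G a_large.
pose P := [set p in setX G G | s <= #|p.1 :\: p.2|].
have card_P : #|P| < 2 ^ (2 * L + 1).
  by apply: card_pairs_lt card_G _; apply/subsetP => p; rewrite inE => /andP[].
have Om_gt0 : 0 < #|{ffun 'I_n -> 'I_(4 * D).+1}| by rewrite card_ffun card_ord expn_gt0.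
have a_gt0 : 0 < a by case: a a_large => //; rewrite mul0n.
have hitP : forall p, p \in P ->
    #|{ffun 'I_n -> 'I_(4 * D).+1}|
    <= a * #|[set w : {ffun 'I_n -> 'I_(4 * D).+1} | separates (pool w) p.1 p.2]|.
  move=> [g h]; rewrite !inE /= => /andP[/andP[gG hG] far].
  apply: card_separating_pools; last by apply: leq_trans a_large _; rewrite leq_mul2l far orbT.
  by have := cardsU g h; have := small_G g gG; have := small_G h hG; lia.
have [ws [size_ws hit_ws]] := greedy_cover Om_gt0 a_gt0 hitP card_P.
exists [seq pool w | w <- ws]; rewrite size_map size_ws /=.
apply/forall_inP => g gG; apply/forall_inP => h hG; apply/implyP => far.
have /hit_ws/hasP[w w_ws sep_w] : (g, h) \in P by rewrite !inE gG hG far.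
by apply: separates_outcome_neq; apply/hasP; exists (pool w); rewrite ?map_f.
Qed.

Lemma separating1_neq n (Ts : seq {set 'I_n}) G g h : separating 1 Ts G ->
  g \in G -> h \in G -> g != h -> outcome Ts g != outcome Ts h.
Proof.
move=> /forall_inP sepG gG hG g_neq_h.
have [/eqP g_sub_h | gh_gt0] := posnP #|g :\: h|; last first.
  exact: (implyP (forall_inP (sepG g gG) h hG)).
rewrite eq_sym; apply: (implyP (forall_inP (sepG h hG) g gG)).
rewrite lt0n cards_eq0 setD_eq0; apply: contra g_neq_h => h_sub_g.
by rewrite eqEsubset h_sub_g -setD_eq0 -cards_eq0 g_sub_h.
Qed.

Lemma test_resp_set1 n (e : {set 'I_n}) x : test_resp e [set x] = (x \in e).
Proof. by rewrite /test_resp setI_eq0 disjoints1 negbK. Qed.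

Lemma outcome_setD n (Ts : seq {set 'I_n}) g e :
  outcome [seq T :\: g | T <- Ts] e = outcome Ts (e :\: g).
Proof.
rewrite /outcome -map_comp; apply: eq_map => T /=.
by rewrite /test_resp setIDAC setIDA.
Qed.

Section Algorithm.

Variables (n t L : nat) (E : {set {set 'I_n}}) (pools1 : seq {set 'I_n}).
Hypotheses (t_gt0 : 0 < t) (card_E : #|E| <= 2 ^ L) (pools1_far : separating t pools1 E).

Definition candidates r1 := [set e in E | outcome pools1 e == r1].

(* [set0] is a junk value, used only when no hyperedge of [E] has outcome [r1]. *)
Definition pivot r1 := odflt set0 [pick e in candidates r1].

Definition pools2 r1 := [seq [set x] | x <- enum (pivot r1)].

Definition survivors r1 r2 := [set e in candidates r1 | outcome (pools2 r1) e == r2].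

Definition residues r1 r2 := [set e :\: pivot r1 | e in survivors r1 r2].

Lemma pivot_candidate r1 e : e \in candidates r1 -> pivot r1 \in candidates r1.
Proof. by rewrite /pivot; case: pickP => [e' -> //| /(_ e)->]. Qed.

Lemma card_residue_lt r1 r2 g : g \in residues r1 r2 -> #|g| < t.
Proof.
case/imsetP => e; rewrite inE => /andP[e_cand _] ->.
have := pivot_candidate e_cand; rewrite !inE => /andP[pivotE /eqP out_pivot].
move: e_cand; rewrite inE => /andP[eE /eqP out_e].
rewrite ltnNge; apply/negP => far.
have := implyP (forall_inP (forall_inP pools1_far e eE) _ pivotE) far.
by rewrite out_e out_pivot eqxx.
Qed.

Lemma residue_pools r1 r2 :
  exists Ts, (size Ts <= 10 * t * (2 * L + 1)) && separating 1 Ts (residues r1 r2).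
Proof.
apply: (@separating_pools _ _ t); last by rewrite muln1; lia.
- apply: leq_trans card_E; apply: leq_trans (leq_imset_card _ _) _.
  by apply/subset_leq_card/subsetP => e; rewrite !inE => /andP[/andP[]].
- by move=> g /card_residue_lt /ltnW.
Qed.

Definition pools3 r1 r2 := [seq T :\: pivot r1 | T <- xchoose (residue_pools r1 r2)].

Definition algorithm := ThreeStage pools1 pools2 pools3.

Lemma algorithm_finds : finds algorithm E.
Proof.
move=> e f eE fE e_neq_f; rewrite /responses /resp3 /resp2 /resp1 /= => -[R1 R2 R3].
set r1 := map (test_resp e) pools1 in R1 R2 R3; rewrite -R1 in R2 R3.
set r2 := map (test_resp e) (pools2 r1) in R2 R3; rewrite -R2 in R3.
have e_surv : e \in survivors r1 r2 by rewrite !inE eE !eqxx.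
have f_surv : f \in survivors r1 r2 by rewrite !inE fE /outcome -R1 -R2 !eqxx.
have agree : {in pivot r1, forall x, (x \in e) = (x \in f)}.
  have /eq_in_map same2 : map (test_resp e) (pools2 r1) = map (test_resp f) (pools2 r1) := R2.
  move=> x x_pivot; rewrite -!test_resp_set1; apply: same2.
  by apply: map_f; rewrite mem_enum.
have res_neq : e :\: pivot r1 != f :\: pivot r1.
  apply/eqP => res_eq; apply: e_neq_f; apply/setP => x.
  have [/agree // | x_pivot] := boolP (x \in pivot r1).
  by move/setP/(_ x): res_eq; rewrite !inE x_pivot.
have /andP[_ sep3] := xchooseP (residue_pools r1 r2).
have := separating1_neq sep3 (imset_f _ e_surv) (imset_f _ f_surv) res_neq.
by rewrite -!outcome_setD /outcome; move: R3; rewrite /pools3 => ->; rewrite eqxx.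
Qed.

Lemma ntests_algorithm d : (forall e, e \in E -> #|e| <= d) ->
  ntests algorithm E <= size pools1 + d + 10 * t * (2 * L + 1).
Proof.
move=> small_E; apply/bigmax_leqP => e _; rewrite /ntests_for /=.
set r1 := resp1 algorithm e; set r2 := resp2 algorithm e.
have /andP[size3 _] := xchooseP (residue_pools r1 r2).
rewrite !size_map -cardE leq_add // leq_add2l /pivot.
by case: pickP => [e' | _]; rewrite ?cards0 // inE => /andP[/small_E].
Qed.

End Algorithm.

Lemma three_stage_ntests n d t (E : {set {set 'I_n}}) :
  0 < t -> d <= 4 * t * t -> (forall e, e \in E -> #|e| <= d) ->
  exists A : three_stage n,
    finds A E /\ ntests A E <= 50 * t * (2 * up_log 2 #|E| + 1) + d.
Proof.
move=> t_gt0 d_le small_E; have card_E := up_logP #|E| (ltnSn 1).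
have pools1_large : 2 * (4 * d).+1 <= 40 * t * t by nia.
have [pools1 /andP[size1 sep1]] := separating_pools card_E small_E pools1_large.
exists (algorithm t_gt0 card_E sep1); split; first exact: algorithm_finds.
apply: leq_trans (ntests_algorithm _ _ _ small_E) _; lia.
Qed.

Lemma ln_le x y : (0 < x)%R -> (x <= y)%R -> (ln x <= ln y)%R.
Proof. by move=> x_gt0 [/(ln_increasing _ _ x_gt0)/Rlt_le | ->]; [| apply: Rle_refl]. Qed.

Lemma INR_expn b k : INR (b ^ k) = (INR b ^ k)%R.
Proof. by elim: k => [|k IHk] //=; rewrite expnS mult_INR IHk. Qed.

Lemma up_log2_le_ln m : 0 < m -> (INR (up_log 2 m) <= 4 * ln (INR m))%R.
Proof.
move=> m_gt0; have ln2_gt : (/ 2 < ln 2)%R := ln_lt_2.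
have [->|L_gt0] := posnP (up_log 2 m).
  have : (ln 1 <= ln (INR m))%R by apply: ln_le; [lra | apply: (le_INR 1); apply/leP].
  rewrite ln_1 /=; lra.
have m_gt1 : 1 < m by move: L_gt0; rewrite up_log_gt0 => /andP[].
have ln2_le : (ln 2 <= ln (INR m))%R by apply: ln_le; [lra | apply: (le_INR 2); apply/leP].
have : (ln (2 ^ (up_log 2 m).-1) < ln (INR m))%R.
  apply: ln_increasing; first by apply: pow_lt; lra.
  by rewrite -[2%R]/(INR 2) -INR_expn; apply/lt_INR/ltP/up_log_gtn.
rewrite ln_pow; last lra.
rewrite -(prednK L_gt0) S_INR; move: (INR _) (pos_INR (up_log 2 m).-1) => x x_ge0.
have : (0 <= (x + 1) * (ln 2 - / 2))%R by apply: Rmult_le_pos; lra.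
nra.
Qed.

Lemma three_stage_sqrt_ntests n d (E : {set {set 'I_n}}) :
  0 < d -> (forall e, e \in E -> #|e| <= d) ->
  exists A : three_stage n,
    finds A E /\ ntests A E <= 100 * Nat.sqrt d * up_log 2 #|E| + 51 * d.
Proof.
move=> d_gt0 small_E; have [/leP sqrt_le /leP sqrt_gt] := Nat.sqrt_spec d (le_0_n d).
set t := Nat.sqrt d in sqrt_le sqrt_gt *.
have t_gt0 : 0 < t by nia.
have d_le : d <= 4 * t * t by nia.
have [A [finds_A ntests_A]] := three_stage_ntests t_gt0 d_le small_E.
by exists A; split=> //; nia.
Qed.

Theorem corollary3 :
  exists C : R, (0 < C)%R /\
    forall (n d : nat) (E : {set {set 'I_n}}),
      (0 < n)%N -> (0 < d)%N ->
      E != set0 ->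
      (forall e, e \in E -> (#|e| <= d)%N) ->
      exists A : three_stage n,
        finds A E /\
        (INR (ntests A E) <= C * (sqrt (INR d) * ln (INR #|E|) + INR d))%R.
Proof.
exists 400%R; split; first lra.
move=> n d E _ d_gt0 E_neq0 small_E.
have [A [finds_A ntests_le]] := three_stage_sqrt_ntests d_gt0 small_E.
exists A; split=> //; apply: Rle_trans (le_INR _ _ (leP ntests_le)) _.
have t_le : (INR (Nat.sqrt d) <= sqrt (INR d))%R.
  rewrite -(sqrt_square (INR _)); last exact: pos_INR.
  apply: sqrt_le_1_alt; rewrite -mult_INR; apply: le_INR.
  exact: (Nat.sqrt_spec d (le_0_n d)).1.
have L_le : (INR (up_log 2 #|E|) <= 4 * ln (INR #|E|))%R.
  by apply: up_log2_le_ln; rewrite card_gt0.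
rewrite plus_INR !mult_INR (INR_IZR_INZ 100) (INR_IZR_INZ 51) /=.
have := Rmult_le_compat_r _ _ _ (pos_INR (up_log 2 #|E|)) t_le.
have := Rmult_le_compat_l _ _ _ (sqrt_pos (INR d)) L_le.
have := pos_INR d.
move: (sqrt (INR d)) (ln (INR #|E|)) (INR (Nat.sqrt d)) (INR d) (INR (up_log 2 #|E|)).
by move=> S l T D Lr; lra.
Qed.
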